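(* Let $(X,\tau)$ be a fuzzifying topological space and let $\beta_P\in\Im(P(X))$ satisfy $\beta_P(A)\le\tau_P(A)$ for all $A\subseteq X$. Then $\beta_P$ is a pre-base of $\tau_P$ if and only if $\tau_P=\beta_P^{(\cup)}$, where $$\beta_P^{(\cup)}(A)=\bigvee\Big\{\bigwedge_{\lambda\in\Lambda}\beta_P(B_\lambda)\;:\;\{B_\lambda\}_{\lambda\in\Lambda}\subseteq P(X),\ \bigcup_{\lambda\in\Lambda}B_\lambda=A\Big\}.$$
   Context: $\Im(Y)$ denotes the set of fuzzy subsets $\mu:Y\to[0,1]$ of a set $Y$, and $P(X)$ the power set of $X$. A fuzzifying topology on $X$ is $\tau\in\Im(P(X))$ with $\tau(X)=1$, $\tau(A\cap B)\ge\min(\tau(A),\tau(B))$ and $\tau(\bigcup_\lambda A_\lambda)\ge\inf_\lambda\tau(A_\lambda)$. Its neighbourhood degrees are $N_x(A)=\sup_{x\in B\subseteq A}\tau(B)$, its closure is $Cl(A)(x)=1-N_x(X\setminus A)$, and for a fuzzy set $\mu\in\Im(X)$, $Int(\mu)(x)=\sup_{B\subseteq X,\,x\in B}\min(\tau(B),\inf_{y\in B}\mu(y))$. The fuzzifying pre-open sets are $\tau_P(A)=\inf_{x\in A}Int(Cl(A))(x)$, and the pre-neighbourhood degrees are $N^P_x(A)=\sup_{x\in B\subseteq A}\tau_P(B)$. A fuzzy family $\beta_P\in\Im(P(X))$ with $\beta_P\le\tau_P$ pointwise is called a pre-base of $\tau_P$ if for all $x\in X$ and $A\subseteq X$, $N^P_x(A)\le\sup_{x\in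 B\subseteq A}\beta_P(B)$. *)

From HB Require Import structures.
From mathcomp Require Import all_boot all_order all_algebra.
From mathcomp Require Import boolp classical_sets reals.
Set Implicit Arguments. Unset Strict Implicit. Unset Printing Implicit Defensive.
Import Order.TTheory GRing.Theory Num.Theory.
Local Open Scope classical_set_scope.
Local Open Scope ring_scope.

Section Fuzzy.
Variables (R : realType) (X : Type).

(* Supremum / infimum in the complete lattice [0,1]:
   sup of the empty family is 0, inf of the empty family is 1. *)
Definition sup01 (S : set R) : R := sup (S `|` [set 0]).
Definition inf01 (S : set R) : R := inf (S `|` [set 1]).

Definition fuzzifying_topology (tau : set X -> R) : Prop :=
  (forall A, 0 <= tau A <= 1) /\
  tau setT = 1 /\
  (forall A B, Order.min (tau A) (tau B) <= tau (A `&` B)) /\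
  (forall (I : Type) (A : I -> set X),
      inf01 [set tau (A i) | i in setT] <= tau (\bigcup_(i in setT) A i)).

Variable tau : set X -> R.

Definition nbhd (x : X) (A : set X) : R :=
  sup01 [set tau B | B in [set B | B x /\ B `<=` A]].

Definition fclosure (A : set X) (x : X) : R := 1 - nbhd x (~` A).

Definition finterior (mu : X -> R) (x : X) : R :=
  sup01 [set Order.min (tau B) (inf01 [set mu y | y in B]) | B in [set B | B x]].

Definition tauP (A : set X) : R :=
  inf01 [set finterior (fclosure A) x | x in A].

Definition pre_nbhd (x : X) (A : set X) : R :=
  sup01 [set tauP B | B in [set B | B x /\ B `<=` A]].

Definition pre_base (betaP : set X -> R) : Prop :=
  (forall A, betaP A <= tauP A) /\
  (forall x A, pre_nbhd x A <= sup01 [set betaP B | B in [set B | B x /\ B `<=` A]]).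

End Fuzzy.

Definition beta_union (R : realType) (X : Type) (beta : set X -> R) (A : set X) : R :=
  sup01 [set r | exists (I : Type) (B : I -> set X),
           \bigcup_(i in setT) B i = A /\ r = inf01 [set beta (B i) | i in setT]].

(* Pre-openness is preserved by arbitrary unions: tau_P(U_i B_i) >= inf_i tau_P(B_i).
   Hence every family below tau_P generates, by unions, a family beta^(cup) still
   below tau_P.  If beta is a pre-base, then for x in A and eps > 0 some B_x with
   x in B_x <= A has beta(B_x) > tau_P(A) - eps; these B_x cover A, so
   tau_P(A) - eps <= beta^(cup)(A).  Conversely, if tau_P = beta^(cup) and
   x in B <= A, each cover (B_i) of B has a member containing x, and
   inf_i beta(B_i) <= beta(B_i) bounds tau_P(B) by the pre-base supremum. *)

From Pilot Require Import Defs.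
From HB Require Import structures.
From mathcomp Require Import all_boot all_order all_algebra.
From mathcomp Require Import boolp classical_sets reals.
From mathcomp Require Import lra.
Set Implicit Arguments. Unset Strict Implicit. Unset Printing Implicit Defensive.
Import Order.TTheory GRing.Theory Num.Theory.
Local Open Scope classical_set_scope.
Local Open Scope ring_scope.

Section Sup01Inf01.
Variable R : realType.
Implicit Types (S : set R) (r c : R).

Lemma le_sup01 S r : ubound S 1 -> S r -> r <= sup01 S.
Proof.
move=> S1 Sr; apply: ub_le_sup; last by left.
by exists 1 => s [/S1 // | ->]; exact: ler01.
Qed.

Lemma sup01_ge0 S : ubound S 1 -> 0 <= sup01 S.
Proof.
move=> S1; apply: ub_le_sup; last by right.
by exists 1 => s [/S1 // | ->]; exact: ler01.
Qed.

Lemma sup01_le S c : 0 <= c -> ubound S c -> sup01 S <= c.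
Proof.
move=> c0 Sc; apply: ge_sup; first by exists 0; right.
by move=> s [/Sc // | ->].
Qed.

Lemma inf01_le S r : lbound S 0 -> S r -> inf01 S <= r.
Proof.
move=> S0 Sr; apply: ge_inf; last by left.
by exists 0 => s [/S0 // | ->]; exact: ler01.
Qed.

Lemma inf01_le1 S : lbound S 0 -> inf01 S <= 1.
Proof.
move=> S0; apply: ge_inf; last by right.
by exists 0 => s [/S0 // | ->]; exact: ler01.
Qed.

Lemma le_inf01 S c : c <= 1 -> lbound S c -> c <= inf01 S.
Proof.
move=> c1 Sc; apply: lb_le_inf; first by exists 1; right.
by move=> s [/Sc // | ->].
Qed.

Variables (I : Type) (f : I -> R).
Hypothesis f_ge0 : forall i, 0 <= f i.

Lemma image_lbound0 : lbound [set f i | i in setT] 0.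
Proof. by move=> _ [i _ <-]. Qed.

Lemma inf01_image_le i : inf01 [set f i | i in setT] <= f i.
Proof. by apply: inf01_le; [exact: image_lbound0 | exists i]. Qed.

Lemma inf01_image_le1 : inf01 [set f i | i in setT] <= 1.
Proof. exact/inf01_le1/image_lbound0. Qed.

End Sup01Inf01.

Section Neighbourhoods.
Variables (R : realType) (X : Type) (gamma : set X -> R).
Hypothesis gamma01 : forall A, 0 <= gamma A <= 1.

Lemma gamma_image_ubound1 (P : set (set X)) : ubound [set gamma B | B in P] 1.
Proof. by move=> _ [B _ <-]; case/andP: (gamma01 B). Qed.

Lemma nbhd_01 x A : 0 <= nbhd gamma x A <= 1.
Proof.
by rewrite sup01_ge0 ?sup01_le //; exact: gamma_image_ubound1.
Qed.

Lemma le_nbhd x A B : B x -> B `<=` A -> gamma B <= nbhd gamma x A.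
Proof. by move=> Bx BA; apply: le_sup01; [exact: gamma_image_ubound1 | exists B]. Qed.

Lemma nbhd_le x A c : 0 <= c -> (forall B, B x -> B `<=` A -> gamma B <= c) ->
  nbhd gamma x A <= c.
Proof. by move=> c0 le_c; apply: sup01_le => // _ [B [Bx BA] <-]; exact: le_c. Qed.

Lemma nbhd_subset x A A' : A `<=` A' -> nbhd gamma x A <= nbhd gamma x A'.
Proof.
move=> AA'; apply: nbhd_le; first by case/andP: (nbhd_01 x A').
by move=> B Bx BA; apply: le_nbhd => // y /BA /AA'.
Qed.

End Neighbourhoods.

Section PreOpenSets.
Variables (R : realType) (X : Type) (tau : set X -> R).
Hypothesis tau01 : forall A, 0 <= tau A <= 1.

Lemma fclosure_01 A x : 0 <= Defs.fclosure tau A x <= 1.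
Proof.
rewrite /Defs.fclosure; case/andP: (nbhd_01 tau01 x (~` A)) => N0 N1.
by rewrite subr_ge0 N1 /= lerBlDr lerDl.
Qed.

Lemma fclosure_subset A A' x :
  A `<=` A' -> Defs.fclosure tau A x <= Defs.fclosure tau A' x.
Proof.
by move=> AA'; rewrite lerB // nbhd_subset // => y nA'y /AA'.
Qed.

Lemma finterior_01 mu x : 0 <= finterior tau mu x <= 1.
Proof.
have ub1 : ubound
    [set Order.min (tau B) (inf01 [set mu y | y in B]) | B in [set B | B x]] 1.
  by move=> _ [B _ <-]; rewrite ge_min; case/andP: (tau01 B) => _ ->.
by rewrite sup01_ge0 ?sup01_le.
Qed.

Lemma finterior_le mu nu x : (forall y, 0 <= mu y) -> (forall y, mu y <= nu y) ->
  finterior tau mu x <= finterior tau nu x.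
Proof.
move=> mu0 munu; apply: sup01_le; first by case/andP: (finterior_01 nu x).
move=> _ [B Bx <-].
apply: (@le_trans _ _ (Order.min (tau B) (inf01 [set nu y | y in B]))).
  rewrite le_min2 // le_inf01 ?inf01_le1 //; first by move=> _ [y _ <-].
  move=> _ [y By <-]; apply: le_trans (munu y).
  by apply: inf01_le; [move=> _ [z _ <-] | exists y].
apply: le_sup01; last by exists B.
by move=> _ [C _ <-]; rewrite ge_min; case/andP: (tau01 C) => _ ->.
Qed.

Lemma tauP_01 A : 0 <= tauP tau A <= 1.
Proof.
have int0 : lbound [set finterior tau (Defs.fclosure tau A) x | x in A] 0.
  by move=> _ [x _ <-]; case/andP: (finterior_01 (Defs.fclosure tau A) x).
by rewrite le_inf01 ?inf01_le1.
Qed.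

Lemma tauP_le_finterior A x :
  A x -> tauP tau A <= finterior tau (Defs.fclosure tau A) x.
Proof.
move=> Ax; apply: inf01_le; last by exists x.
by move=> _ [y _ <-]; case/andP: (finterior_01 (Defs.fclosure tau A) y).
Qed.

Lemma tauP_bigcup (I : Type) (A : I -> set X) :
  inf01 [set tauP tau (A i) | i in setT] <= tauP tau (\bigcup_(i in setT) A i).
Proof.
have tauP0 i : 0 <= tauP tau (A i) by case/andP: (tauP_01 (A i)).
apply: le_inf01; first exact: inf01_image_le1.
move=> _ [x [i _ Aix] <-]; apply: le_trans (inf01_image_le tauP0 i) _.
apply: le_trans (tauP_le_finterior Aix) _; apply: finterior_le.
  by move=> y; case/andP: (fclosure_01 (A i) y).
by move=> y; apply: fclosure_subset => z Aiz; exists i.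
Qed.

Lemma tauP_le_pre_nbhd A x : A x -> tauP tau A <= pre_nbhd tau x A.
Proof. by move=> Ax; apply: (le_nbhd tauP_01). Qed.

End PreOpenSets.

Section UnionGeneratedFamily.
Variables (R : realType) (X : Type) (beta : set X -> R).
Hypothesis beta01 : forall A, 0 <= beta A <= 1.

Let beta_ge0 A : 0 <= beta A. Proof. by case/andP: (beta01 A). Qed.

Lemma cover_inf_ubound1 A : ubound [set r | exists (I : Type) (B : I -> set X),
  \bigcup_(i in setT) B i = A /\ r = inf01 [set beta (B i) | i in setT]] 1.
Proof. by move=> _ [I [B [_ ->]]]; apply: inf01_image_le1. Qed.

Lemma cover_inf01_le_beta_union A (I : Type) (B : I -> set X) :
  \bigcup_(i in setT) B i = A ->
  inf01 [set beta (B i) | i in setT] <= beta_union beta A.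
Proof. by move=> cover; apply: le_sup01; [exact: cover_inf_ubound1 | exists I, B]. Qed.

Lemma beta_union_ge0 A : 0 <= beta_union beta A.
Proof. exact/sup01_ge0/cover_inf_ubound1. Qed.

Lemma beta_union_le (gamma : set X -> R) A :
  (forall B, beta B <= gamma B) -> 0 <= gamma A ->
  (forall (I : Type) (B : I -> set X),
    inf01 [set gamma (B i) | i in setT] <= gamma (\bigcup_(i in setT) B i)) ->
  beta_union beta A <= gamma A.
Proof.
move=> beta_le gammaA0 gamma_bigcup; apply: sup01_le => // _ [I [B [<- ->]]].
apply: le_trans (gamma_bigcup I B); apply: le_inf01; first exact: inf01_image_le1.
move=> _ [i _ <-].
exact: le_trans (inf01_image_le (fun j => beta_ge0 (B j)) i) (beta_le (B i)).
Qed.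

Lemma beta_union_le_nbhd x A B : B x -> B `<=` A ->
  beta_union beta B <= nbhd beta x A.
Proof.
move=> Bx BA; apply: sup01_le; first by case/andP: (nbhd_01 beta01 x A).
move=> _ [I [C [cover ->]]].
have [i _ Cix] : (\bigcup_(i in setT) C i) x by rewrite cover.
apply: le_trans (inf01_image_le (fun j => beta_ge0 (C j)) i) _.
apply: (le_nbhd beta01) => // y Ciy.
by apply: BA; rewrite -cover; exists i.
Qed.

Lemma le_beta_union (gamma : set X -> R) A : gamma A <= 1 ->
  (forall x, A x -> gamma A <= nbhd beta x A) -> gamma A <= beta_union beta A.
Proof.
move=> gammaA1 gamma_le_nbhd; apply/ler_addgt0Pr => e e0.
pose t := gamma A - e; have tE : t = gamma A - e by [].
have [t_le0 | t_gt0] := leP t 0.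
  by have := beta_union_ge0 A; lra.
have pick_around (x : {x | A x}) : exists B, [/\ B (sval x), B `<=` A & t < beta B].
  case: x => x Ax /=; apply: contrapT => no_B.
  suff : nbhd beta x A <= t by have := gamma_le_nbhd x Ax; lra.
  apply: nbhd_le; first exact: ltW.
  by move=> B Bx BA; rewrite leNgt; apply/negP => tB; apply: no_B; exists B.
have [B B_around] := choice pick_around.
have cover : \bigcup_(i in setT) B i = A.
  apply/seteqP; split; first by move=> x [i _]; case: (B_around i) => _ BA _ /BA.
  by move=> x Ax; exists (exist _ x Ax) => //; case: (B_around (exist _ x Ax)).
suff : t <= inf01 [set beta (B i) | i in setT].
  by have := cover_inf01_le_beta_union cover; lra.
apply: le_inf01; first lra.
by move=> _ [i _ <-]; case: (B_around i) => _ _ /ltW.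
Qed.

End UnionGeneratedFamily.

Theorem theorem2p1 (R : realType) (X : Type) (tau betaP : set X -> R) :
  fuzzifying_topology tau ->
  (forall A, 0 <= betaP A <= 1) ->
  (forall A, betaP A <= tauP tau A) ->
  (pre_base tau betaP <-> tauP tau = beta_union betaP).
Proof.
move=> [tau01 _] beta01 beta_le_tauP.
have tauP01 := tauP_01 tau01.
split=> [[_ pre_nbhd_le] | tauP_eq].
- apply: funext => A; apply: le_anti; apply/andP; split.
    apply: le_beta_union => //; first by case/andP: (tauP01 A).
    move=> x Ax; apply: le_trans (pre_nbhd_le x A).
    exact: tauP_le_pre_nbhd.
  apply: beta_union_le => //; first by case/andP: (tauP01 A).
  exact: tauP_bigcup.
- split=> // x A; apply: nbhd_le; first by case/andP: (nbhd_01 beta01 x A).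
  by move=> B Bx BA; rewrite tauP_eq; exact: beta_union_le_nbhd.
Qed.
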